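(* If $\mathfrak{p}=\mathfrak{c}$, then every almost disjoint family of size less than $\mathfrak{c}$ can be extended to a strongly tight MAD family.
   Context: An almost disjoint (AD) family is a family of infinite subsets of $\omega$ with pairwise finite intersections; MAD means maximal AD. $\mathcal{I}(\mathcal{A})$ is the ideal generated by $\mathcal{A}$ and the finite sets. An ideal $\mathcal{I}$ is strongly tight if for every $\{X_n:n\in\omega\}\subseteq[\omega]^\omega$ such that $\{n:X_n\subseteq^*Y\}$ is finite for every $Y\in\mathcal{I}$, there is $A\in\mathcal{I}$ with $A\cap X_n\ne\emptyset$ for all $n$; $\mathcal{A}$ is strongly tight if $\mathcal{I}(\mathcal{A})$ is. $\mathfrak{p}$ is the pseudointersection number. *)

From HB Require Import structures.
From mathcomp Require Import all_boot.
From mathcomp Require Import boolp classical_sets functions cardinality.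
Set Implicit Arguments. Unset Strict Implicit. Unset Printing Implicit Defensive.
Local Open Scope classical_set_scope.

Definition almost_sub (A B : set nat) : Prop := finite_set (A `\` B).

Definition AD (F : set (set nat)) : Prop :=
  (forall A, F A -> infinite_set A) /\
  (forall A B, F A -> F B -> A <> B -> finite_set (A `&` B)).

Definition MAD (F : set (set nat)) : Prop :=
  AD F /\ (forall G, AD G -> F `<=` G -> G = F).

Definition gen_ideal (F : set (set nat)) : set (set nat) :=
  [set Y | exists (G : set (set nat)) (K : set nat),
     [/\ finite_set G, G `<=` F, finite_set K &
         Y `<=` (\bigcup_(A in G) A) `|` K]].

Definition strongly_tight_ideal (I : set (set nat)) : Prop :=
  forall X : nat -> set nat,
    (forall n, infinite_set (X n)) ->
    (forall Y, I Y -> finite_set [set n | almost_sub (X n) Y]) ->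
    exists A, I A /\ forall n, X n `&` A !=set0.

Definition strongly_tight (F : set (set nat)) : Prop :=
  strongly_tight_ideal (gen_ideal F).

(* |F| < c for F a family of subsets of omega (so |F| <= c automatically):
   there is no injection of P(omega) into F. *)
Definition lt_continuum (F : set (set nat)) : Prop :=
  ~ exists f : set nat -> set nat, injective f /\ (forall X, F (f X)).

Definition SFIP (F : set (set nat)) : Prop :=
  forall G : set (set nat), finite_set G -> G `<=` F -> G !=set0 ->
    infinite_set (\bigcap_(A in G) A).

Definition has_pseudointersection (F : set (set nat)) : Prop :=
  exists P : set nat, infinite_set P /\ forall A, F A -> almost_sub P A.

(* p = c : since p <= c always, p = c says no family of size < c
   witnesses the definition of p, i.e. every family F of infinite sets of
   size < c with SFIP has an infinite pseudointersection. *)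
Definition p_eq_c : Prop :=
  forall F : set (set nat), lt_continuum F ->
    (forall A, F A -> infinite_set A) -> SFIP F -> has_pseudointersection F.

From mathcomp Require Import all_boot.
From mathcomp Require Import boolp classical_sets cardinality wochoice.
From Stdlib Require Cantor.
From Stdlib Require Import Inverse_Image.
Local Open Scope classical_set_scope.

(* Under p = c, every family of fewer than c functions is eventually dominated,
   and if B is AD with |B| < c then every set not almost covered by finitely
   many members of B has an infinite subset almost disjoint from all of B.
   Hence, for such B and a sequence (X n) as in the definition of strong
   tightness of I(B), each X n contains an infinite P n that is either almost
   disjoint from B or inside a single member of B, each member being used for
   finitely many n only; one point of each P n above a dominating function
   gives an infinite N almost disjoint from B meeting every X n.  Enumerating
   all sequences (coded by subsets of nat) along a well-order whose initial
   segments have size < c and adding such an N at each stage extends A to a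
   strongly tight AD family, and strongly tight AD families are maximal. *)

Arguments Cantor.to_nat : simpl never.
Arguments Cantor.of_nat : simpl never.

Lemma finite_nat_bounded {A : set nat} : finite_set A -> exists m, A `<=` `I_m.
Proof.
move=> /finite_fsetP[X ->]; exists (\max_(x <- finmap.enum_fset X) x).+1 => x /= xX.
by rewrite ltnS; apply: (@leq_bigmax_seq _ _ predT (fun y => y)).
Qed.

Lemma infinite_natP (A : set nat) :
  infinite_set A <-> forall m, exists2 x, (m <= x)%N & A x.
Proof.
split=> [A_inf m|A_unbounded /finite_nat_bounded[m Am]].
  apply: contrapT => no_x; apply: A_inf; apply: (sub_finite_set _ (finite_II m)).
  by move=> x Ax /=; rewrite ltnNge; apply/negP => mx; apply: no_x; exists x.
by have [x mx /Am] := A_unbounded m; rewrite /= ltnNge mx.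
Qed.

Lemma nat_least {P : set nat} :
  P !=set0 -> exists2 m, P m & forall k, P k -> (m <= k)%N.
Proof.
case=> n Pn; have exP : exists n, `[< P n >] by exists n; apply/asboolP.
by case: (ex_minnP exP) => m /asboolP Pm m_min; exists m => // k /asboolP/m_min.
Qed.

Lemma nat_greatest {P : set nat} {b : nat} :
  P !=set0 -> (forall k, P k -> (k <= b)%N) ->
  exists2 m, P m & forall k, P k -> (k <= m)%N.
Proof.
case=> n Pn P_le_b; have exP : exists n, `[< P n >] by exists n; apply/asboolP.
have ubP k : `[< P k >] -> (k <= b)%N by move/asboolP; apply: P_le_b.
by case: (ex_maxnP exP ubP) => m /asboolP Pm m_max; exists m => // k /asboolP/m_max.
Qed.

Lemma to_nat_ge_snd i k : (k <= Cantor.to_nat (i, k))%N.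
Proof. exact: leq_trans (leq_addr i k) (introT leP (Cantor.to_nat_non_decreasing i k)). Qed.

Lemma of_nat_fst_le p : ((Cantor.of_nat p).1 <= p)%N.
Proof.
rewrite -{2}(Cantor.cancel_to_of p); case: (Cantor.of_nat p) => i k /=.
exact: leq_trans (leq_addl k i) (introT leP (Cantor.to_nat_non_decreasing i k)).
Qed.

Definition encode (X : nat -> set nat) : set nat :=
  [set p | X (Cantor.of_nat p).1 (Cantor.of_nat p).2].

Definition decode (Z : set nat) (n : nat) : set nat :=
  [set k | Z (Cantor.to_nat (n, k))].

Lemma encodeK : cancel encode decode.
Proof.
move=> X; apply/funext => n; apply/funext => k.
by rewrite /decode /encode /= Cantor.cancel_of_to.
Qed.

Lemma sub_lt_continuum {F G : set (set nat)} :
  F `<=` G -> lt_continuum G -> lt_continuum F.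
Proof. by move=> FG ltG [f [f_inj Ff]]; apply: ltG; exists f; split=> // X; apply: FG. Qed.

Lemma lt_continuum_image (D : set (set nat)) (phi : set nat -> set nat) :
  lt_continuum D -> lt_continuum (phi @` D).
Proof.
move=> ltD [f [f_inj fD]].
have /choice[g gP] : forall X, exists Y, D Y /\ phi Y = f X.
  by move=> X; have [Y DY <-] := fD X; exists Y.
apply: ltD; exists g; split=> [X X' gXX'|X]; last exact: (gP X).1.
by apply: f_inj; rewrite -(gP X).2 -(gP X').2 gXX'.
Qed.

Lemma no_injection_powerset_nat (g : set nat -> nat) : ~ injective g.
Proof.
move=> g_inj; pose D := [set n | exists2 X, g X = n & ~ X n].
have [DgD|nDgD] := pselect (D (g D)); last exact: nDgD (ex_intro2 _ _ D erefl nDgD).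
by case: (DgD) => X /g_inj XD; rewrite XD.
Qed.

Lemma lt_continuum_range (E : nat -> set nat) : lt_continuum (range E).
Proof.
move=> [f [f_inj fE]].
have /choice[g gP] : forall X, exists n, E n = f X.
  by move=> X; have [n _ <-] := fE X; exists n.
by apply: (@no_injection_powerset_nat g) => X X' gXX'; apply: f_inj; rewrite -!gP gXX'.
Qed.

Lemma lt_continuum_setU (F G : set (set nat)) :
  lt_continuum F -> lt_continuum G -> lt_continuum (F `|` G).
Proof.
move=> ltF ltG [f [f_inj fFG]].
pose pair X Y := encode (fun n => if n is 0 then X else Y).
have pair_inj X Y X' Y' : pair X Y = pair X' Y' -> X = X' /\ Y = Y'.
  move=> /(congr1 decode); rewrite !encodeK => e.
  by split; [apply: (congr1 (@^~ 0%N) e) | apply: (congr1 (@^~ 1%N) e)].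
have [[X FX]|noX] := pselect (exists X, forall Y, F (f (pair X Y))).
  apply: ltF; exists (fun Y => f (pair X Y)); split=> // Y Y' /f_inj.
  by case/pair_inj.
have /choice[y yG] : forall X, exists Y, G (f (pair X Y)).
  move=> X; apply: contrapT => noY; apply: noX; exists X => Y.
  by case: (fFG (pair X Y)) => // GY; exfalso; apply: noY; exists Y.
apply: ltG; exists (fun X => f (pair X (y X))); split=> // X X' /f_inj.
by case/pair_inj.
Qed.

Lemma gen_ideal_bigcup {B H : set (set nat)} :
  finite_set H -> H `<=` B -> gen_ideal B (\bigcup_(b in H) b).
Proof. by move=> H_fin HB; exists H, set0; split. Qed.

Lemma gen_idealS {F G : set (set nat)} : F `<=` G -> gen_ideal F `<=` gen_ideal G.
Proof.
move=> FG Y [H [K [H_fin HF K_fin YHK]]]; exists H, K; split=> //.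
exact: subset_trans HF FG.
Qed.

Lemma sub_AD {F G : set (set nat)} : F `<=` G -> AD G -> AD F.
Proof. by move=> FG [G_inf G_ad]; split=> [a /FG/G_inf|a b /FG Ga /FG Gb]; last exact: G_ad. Qed.

Lemma finite_setI_gen_ideal {M : set (set nat)} {Y W : set nat} :
  (forall b, M b -> finite_set (Y `&` b)) -> gen_ideal M W -> finite_set (Y `&` W).
Proof.
move=> YM [H [K [H_fin HM K_fin WHK]]].
apply: (@sub_finite_set _ _ ((\bigcup_(b in H) (Y `&` b)) `|` K)).
  by move=> x [Yx /WHK[[b Hb bx]|Kx]]; [left; exists b | right].
rewrite finite_setU; split=> //; apply: bigcup_finite => // b /HM; exact: YM.
Qed.

Lemma strongly_tight_AD_MAD (M : set (set nat)) : AD M -> strongly_tight M -> MAD M.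
Proof.
move=> adM stM; split=> // G adG MG; apply/seteqP; split=> [Y GY|]; last exact: MG.
apply: contrapT => MY; have Y_inf := adG.1 Y GY.
have YM b : M b -> finite_set (Y `&` b).
  move=> Mb; apply: adG.2 => //; first exact: MG.
  by move=> Yb; apply: MY; rewrite Yb.
have tail_inf n : infinite_set (Y `\` `I_n) by apply: infinite_setD => //; exact: finite_II.
have tails_uncovered W : gen_ideal M W -> finite_set [set n | almost_sub (Y `\` `I_n) W].
  move=> MW; apply: sub_finite_set (@finite_set0 nat) => n tail_W; apply: (tail_inf n).
  apply: (@sub_finite_set _ _ ((Y `\` `I_n `\` W) `|` (Y `&` W))).
    by move=> x [Yx xn]; have [Wx|nWx] := pselect (W x); [right | left].
  by rewrite finite_setU; split=> //; exact: finite_setI_gen_ideal YM MW.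
have [W [MW meets]] := stM (fun n => Y `\` `I_n) tail_inf tails_uncovered.
have [m YWm] := finite_nat_bounded (finite_setI_gen_ideal YM MW).
by have [x [[Yx /= xm] Wx]] := meets m; apply: xm; apply: YWm.
Qed.

Lemma SFIP_infinite {F : set (set nat)} : SFIP F -> forall A, F A -> infinite_set A.
Proof.
move=> sF A FA; rewrite -(bigcap_set1 id A).
by apply: sF; [exact: finite_set1 | move=> _ -> | exists A].
Qed.

Lemma eventually_forall_finite (T : Type) (G : set T) (P : T -> nat -> Prop) :
  finite_set G -> (forall V, G V -> exists c, forall k, (c <= k)%N -> P V k) ->
  exists c, forall V, G V -> forall k, (c <= k)%N -> P V k.
Proof.
move=> G_fin evP.
have /choice[c cP] : forall V, exists c, G V -> forall k, (c <= k)%N -> P V k.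
  move=> V; have [/evP[c cP]|nGV] := pselect (G V); first by exists c.
  by exists 0%N.
have [m cm] := finite_nat_bounded (finite_image c G_fin).
exists m => V GV k mk; apply: cP => //; apply: leq_trans mk.
by apply/ltnW/cm; exists V.
Qed.

Lemma SFIP_cofinite_columns (F : set (set nat)) :
  (forall V, F V -> exists c, forall i, (c <= i)%N ->
     exists c', forall k, (c' <= k)%N -> V (Cantor.to_nat (i, k))) ->
  SFIP F.
Proof.
move=> F_cols G G_fin GF _.
have [c cP] := @eventually_forall_finite _ _
  (fun V i => exists c', forall k, (c' <= k)%N -> V (Cantor.to_nat (i, k)))
  G_fin (fun V GV => F_cols V (GF V GV)).
have [c' c'P] := @eventually_forall_finite _ _ (fun V k => V (Cantor.to_nat (c, k)))
  G_fin (fun V GV => cP V GV c (leqnn c)).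
apply/infinite_natP => m; exists (Cantor.to_nat (c, maxn c' m)).
  exact: leq_trans (leq_maxr c' m) (to_nat_ge_snd _ _).
by move=> V GV; apply: c'P => //; exact: leq_maxl.
Qed.

(* [tau t] is the first index whose set contains [t]; choosing in each [S n]
   an element of largest [tau] forces [S n] into the finite set
   [\bigcup_(m <= tau (s n)) S m]. *)
Lemma finite_to_one_choice {T : pointedType} {S : nat -> set T} :
  (forall n, finite_set (S n)) ->
  (forall F, finite_set F -> finite_set [set n | S n !=set0 /\ S n `<=` F]) ->
  exists s : nat -> T, (forall n, S n !=set0 -> S n (s n)) /\
    forall t, finite_set [set n | S n !=set0 /\ s n = t].
Proof.
move=> S_fin S_cover.
have /choice[tau tauP] : forall t, exists m,
    (exists n, S n t) -> S m t /\ forall n, S n t -> (m <= n)%N.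
  move=> t; have [[n Snt]|noS] := pselect (exists n, S n t); last by exists 0%N => /noS.
  by have [m Smt m_min] := @nat_least [set m | S m t] (ex_intro _ n Snt); exists m.
have /choice[s sP] : forall n, exists x,
    S n !=set0 -> S n x /\ forall y, S n y -> (tau y <= tau x)%N.
  move=> n; have [[x0 Snx0]|Sn0] := pselect (S n !=set0); last by exists point => /Sn0.
  have tau_le_n k : (tau @` S n) k -> (k <= n)%N.
    by move=> [y Sny <-]; apply: (tauP y (ex_intro _ n Sny)).2.
  have [_ [x Snx <-] x_max] := nat_greatest (ex_intro _ _ (imageP tau Snx0)) tau_le_n.
  by exists x => _; split=> // y Sny; apply: x_max; exists y.
exists s; split=> [n /sP[] //|t].
apply: sub_finite_set (S_cover (\bigcup_(m in `I_(tau t).+1) S m) _); last first.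
  by apply: bigcup_finite => //; exact: finite_II.
move=> n [Sn0 snt]; split=> // y Sny.
exists (tau y); last exact: (tauP y (ex_intro _ n Sny)).1.
by rewrite /= ltnS -snt; exact: (sP n Sn0).2.
Qed.

Lemma almost_sub_bigcup_infinite_traces (X : set nat) (G : set (set nat)) :
  finite_set G -> almost_sub X (\bigcup_(b in G) b) ->
  almost_sub X (\bigcup_(b in [set b | G b /\ infinite_set (X `&` b)]) b).
Proof.
move=> G_fin XG.
pose thin := [set b | G b /\ finite_set (X `&` b)].
apply: (@sub_finite_set _ _ ((X `\` \bigcup_(b in G) b) `|` \bigcup_(b in thin) (X `&` b))).
  move=> x [Xx xS]; have [xG|] := pselect ((\bigcup_(b in G) b) x); last by left.
  case: xG => b Gb bx; right; exists b => //; split=> //.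
  by apply: contrapT => Xb_inf; apply: xS; exists b.
rewrite finite_setU; split=> //; apply: bigcup_finite => [|b []//].
by apply: sub_finite_set G_fin => b [].
Qed.

Lemma exists_strict_well_order (T : eqType) :
  exists lt : T -> T -> Prop, well_founded lt /\ forall x y, x <> y -> lt x y \/ lt y x.
Proof.
have [R R_wo] := well_ordering_principle T.
have R_chain : wo_chain R predT by move=> C _; apply: R_wo.
have R_total := wo_chainW R_chain.
have R_anti := wo_chain_antisymmetric R_chain.
pose lt x y := R x y /\ x <> y.
exists lt; split=> [a|x y xy]; last first.
  by case/orP: (R_total x y isT isT) => Rxy; [left | right]; split=> // /esym.
apply: contrapT => a_nacc.
have [|z [[/asboolP z_nacc z_min] _]] := R_wo [pred x | `[< ~ Acc lt x >]].
  by exists a; apply/asboolP.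
apply: z_nacc; constructor=> y [Ryz yz]; apply: contrapT => y_nacc.
by apply: yz; apply: R_anti; rewrite ?Ryz ?z_min //; apply/asboolP.
Qed.

Lemma wf_minimal {T : Type} {lt : T -> T -> Prop} {P : T -> Prop} :
  well_founded lt -> (exists x, P x) -> exists y, P y /\ forall z, lt z y -> ~ P z.
Proof.
move=> lt_wf [x]; elim/(well_founded_ind lt_wf): x => x IH Px.
have [[z [zx Pz]]|no_z] := pselect (exists z, lt z x /\ P z); first exact: IH z zx Pz.
by exists x; split=> // z zx Pz; apply: no_z; exists z.
Qed.

(* Pull a well-order back along an injection of [set nat] into its first
   initial segment of size continuum. *)
Lemma exists_well_order_small_segments : exists lt : set nat -> set nat -> Prop,
  [/\ well_founded lt, forall x y, x <> y -> lt x y \/ lt y x &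
      forall t, lt_continuum [set s | lt s t]].
Proof.
have [lt [lt_wf lt_total]] := exists_strict_well_order (set nat).
have [small|/existsNP big] := pselect (forall t, lt_continuum [set s | lt s t]).
  by exists lt.
have [t0 [/contrapT[e [e_inj e_lt]] t0_min]] := wf_minimal lt_wf big.
exists (fun x y => lt (e x) (e y)); split.
- exact: wf_inverse_image.
- by move=> x y xy; apply: lt_total => /e_inj.
- move=> t [k [k_inj k_lt]]; apply: (t0_min _ (e_lt t)); apply.
  by exists (e \o k); split=> [X Y /e_inj/k_inj|X] //; exact: k_lt.
Qed.

Definition tight_sequence (I : set (set nat)) (X : nat -> set nat) : Prop :=
  (forall n, infinite_set (X n)) /\
  (forall Y, I Y -> finite_set [set n | almost_sub (X n) Y]).

Definition ad_hitting_set (B : set (set nat)) (X : nat -> set nat) (N : set nat) : Prop :=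
  [/\ infinite_set N, forall b, B b -> finite_set (N `&` b) & forall n, X n `&` N !=set0].

Lemma tight_sequence_traces {B : set (set nat)} {X : nat -> set nat} :
  tight_sequence (gen_ideal B) X ->
  exists S : nat -> set (set nat),
    [/\ forall n, finite_set (S n), forall n, S n `<=` B,
      forall n b, S n b -> infinite_set (X n `&` b),
      forall F, finite_set F -> finite_set [set n | S n !=set0 /\ S n `<=` F] &
      forall n, ~ (S n !=set0) ->
        forall H, finite_set H -> H `<=` B -> ~ almost_sub (X n) (\bigcup_(b in H) b)].
Proof.
move=> [X_inf X_tight].
pose cover n H := [/\ finite_set H, H `<=` B & almost_sub (X n) (\bigcup_(b in H) b)].
pose G n := xget set0 (cover n).
pose S n := [set b | G n b /\ infinite_set (X n `&` b)].
have G_fin_B n : finite_set (G n) /\ G n `<=` B.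
  by rewrite /G; case: xgetP => [H _ []|_]; split=> //; exact: finite_set0.
have S_B n : S n `<=` B by move=> b [/(G_fin_B n).2].
have G_S_cover n : cover n (G n) -> almost_sub (X n) (\bigcup_(b in S n) b).
  by case=> G_fin _; apply: almost_sub_bigcup_infinite_traces.
have S_cover n : S n !=set0 -> almost_sub (X n) (\bigcup_(b in S n) b).
  move=> Sn0; apply: G_S_cover; move: Sn0; rewrite /S /G.
  by case: xgetP => // _ [b []].
exists S; split=> // [n|n b []//|F F_fin|n Sn0 H H_fin HB XH].
- by apply: sub_finite_set (G_fin_B n).1 => b [].
- apply: sub_finite_set
    (X_tight _ (gen_ideal_bigcup (finite_setIl B F_fin) (@subIsetr _ F B))).
  move=> n [Sn0 SnF]; apply: sub_finite_set (S_cover n Sn0); apply: setDS.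
  by move=> x [b Snb bx]; exists b => //; split; [apply: SnF | apply: S_B Snb].
- apply: (X_inf n).
  have /G_S_cover : cover n (G n) by apply: (@xgetI _ set0 (cover n) H).
  rewrite (_ : S n = set0) ?bigcup_set0 ?/almost_sub ?setD0 //.
  by apply/seteqP; split=> // b Snb; apply: Sn0; exists b.
Qed.

Section PEqualsC.
Hypothesis pc : p_eq_c.

(* [U B] is the region strictly above the running maximum of [f B] and
   [E m] the union of the columns [i >= m]; a pseudointersection has points
   in arbitrarily far columns, and those points eventually lie in every [U B]. *)
Lemma p_eq_c_dominating (I : set (set nat)) (f : set nat -> nat -> nat) :
  lt_continuum I -> exists g : nat -> nat,
    forall B, I B -> exists N, forall n, (N <= n)%N -> (f B n < g n)%N.
Proof.
move=> ltI.
pose U B := [set p | forall j, (j <= (Cantor.of_nat p).1)%N -> (f B j < (Cantor.of_nat p).2)%N].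
pose E m := [set p | (m <= (Cantor.of_nat p).1)%N].
pose F := U @` I `|` range E.
have ltF : lt_continuum F.
  by apply: lt_continuum_setU; [exact: lt_continuum_image | exact: lt_continuum_range].
have sF : SFIP F.
  apply: SFIP_cofinite_columns => _ [[B _ <-]|[m _ <-]].
    exists 0%N => i _; exists (\max_(j < i.+1) f B j).+1 => k ik j.
    rewrite Cantor.cancel_of_to /= => ji; apply: leq_trans ik; rewrite ltnS.
    exact: (leq_bigmax (Ordinal (ji : (j < i.+1)%N))).
  by exists m => i mi; exists 0%N => k _; rewrite /E /= Cantor.cancel_of_to.
have [Q [Q_inf QF]] := pc _ ltF (SFIP_infinite sF) sF.
have /choice[q qP] : forall n, exists p, Q p /\ (n <= (Cantor.of_nat p).1)%N.
  move=> n; apply: contrapT => noQ; apply: Q_inf.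
  apply: sub_finite_set (QF (E n) _); last by right; exists n.
  by move=> p Qp; split=> // Enp; apply: noQ; exists p.
exists (fun n => (Cantor.of_nat (q n)).2) => B IB.
have [N QUN] := finite_nat_bounded (QF (U B) (or_introl (ex_intro2 _ _ B IB erefl))).
exists N => n Nn; have [Qq nq] := qP n; apply: contrapT => not_lt.
have /QUN : (Q `\` U B) (q n) by split=> // /(_ n nq).
by rewrite /= ltnNge (leq_trans Nn (leq_trans nq (of_nat_fst_le _))).
Qed.

Lemma almost_disjoint_piece (B : set (set nat)) (X : set nat) :
  lt_continuum B ->
  (forall H, finite_set H -> H `<=` B -> ~ almost_sub X (\bigcup_(b in H) b)) ->
  exists P, [/\ P `<=` X, infinite_set P & forall b, B b -> finite_set (P `&` b)].
Proof.
move=> ltB X_uncovered.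
pose F := (fun b => X `\` b) @` B `|` [set X].
have ltF : lt_continuum F.
  apply: lt_continuum_setU; first exact: lt_continuum_image.
  by apply: (sub_lt_continuum _ (lt_continuum_range (fun=> X))) => _ ->; exists 0%N.
have sF : SFIP F.
  move=> G G_fin GF _.
  pose pre V := xget set0 [set b | B b /\ X `\` b = V].
  have preP V : ((fun b => X `\` b) @` B) V -> B (pre V) /\ X `\` pre V = V.
    by case=> b Bb bV; apply: (@xgetPex _ set0 [set b | B b /\ X `\` b = V]); exists b.
  pose H := pre @` (G `&` (fun b => X `\` b) @` B).
  have H_fin : finite_set H by apply/finite_image/finite_setIl.
  have HB : H `<=` B by move=> _ [V [_ /preP[BpV _]] <-].
  apply: sub_infinite_set (X_uncovered H H_fin HB) => x [Xx xH] V GV.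
  have [BV|-> //] := GF V GV; have [_ <-] := preP V BV.
  by split=> // prex; apply: xH; exists (pre V) => //; exists V.
have [Q [Q_inf QF]] := pc _ ltF (SFIP_infinite sF) sF.
have Q_minus_X_fin : finite_set (Q `\` X) by apply: QF; right.
exists (Q `&` X); split; first exact: subIsetr.
  move=> Q_cap_X_fin; apply: Q_inf.
  apply: (@sub_finite_set _ _ ((Q `&` X) `|` (Q `\` X))); last by rewrite finite_setU.
  by move=> x Qx; have [Xx|nXx] := pselect (X x); [left | right].
move=> b Bb; apply: sub_finite_set (QF _ (or_introl (ex_intro2 _ _ b Bb erefl))).
by move=> x [[Qx Xx] bx]; split=> // -[].
Qed.

Lemma tight_sequence_refinement {B : set (set nat)} {X : nat -> set nat} :
  AD B -> lt_continuum B -> tight_sequence (gen_ideal B) X ->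
  exists P : nat -> set nat, [/\ forall n, P n `<=` X n, forall n, infinite_set (P n) &
    forall b, B b -> finite_set [set n | infinite_set (P n `&` b)]].
Proof.
move=> [_ adB] ltB X_tight.
have [S [S_fin S_B S_inf S_cover_fin S0_uncovered]] := tight_sequence_traces X_tight.
have [s [sS s_fin]] := finite_to_one_choice S_fin S_cover_fin.
have /choice[P PP] : forall n, exists P, [/\ P `<=` X n, infinite_set P &
    forall b, B b -> infinite_set (P `&` b) -> S n !=set0 /\ s n = b].
  move=> n; have [Sn0|Sn0] := pselect (S n !=set0).
    exists (X n `&` s n); split=> [x []//||b Bb Xsb_inf].
      exact: S_inf _ _ (sS n Sn0).
    split=> //; apply: contrapT => sb; apply: Xsb_inf.
    apply: sub_finite_set (adB _ _ (S_B _ _ (sS n Sn0)) Bb sb).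
    by move=> x [[_ sx] bx].
  have [P [PX P_inf PB]] := almost_disjoint_piece B (X n) ltB (S0_uncovered n Sn0).
  by exists P; split=> // b Bb /(_ (PB b Bb)).
exists P; split=> [n|n|b Bb]; first by have [] := PP n.
  by have [] := PP n.
apply: sub_finite_set (s_fin b) => n Pnb_inf.
by have [_ _ /(_ b Bb Pnb_inf)] := PP n.
Qed.

Lemma exists_ad_selector {B : set (set nat)} {P : nat -> set nat} :
  lt_continuum B -> (forall n, infinite_set (P n)) ->
  (forall b, B b -> finite_set [set n | infinite_set (P n `&` b)]) ->
  exists N, ad_hitting_set B P N.
Proof.
move=> ltB P_inf P_thin.
have /choice[f fP] : forall b, exists fb : nat -> nat,
    forall n, finite_set (P n `&` b) -> P n `&` b `<=` `I_(fb n).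
  move=> b; suff /choice[fb fbP] : forall n, exists m,
      finite_set (P n `&` b) -> P n `&` b `<=` `I_m by exists fb.
  move=> n; have [/finite_nat_bounded[m Pbm]|Pb_inf] := pselect (finite_set (P n `&` b)).
    by exists m.
  by exists 0%N => /Pb_inf.
have [g g_dom] := p_eq_c_dominating B f ltB.
have /choice[a aP] : forall n, exists x, (maxn (g n) n <= x)%N /\ P n x.
  by move=> n; have [x le_x Px] := (infinite_natP _).1 (P_inf n) (maxn (g n) n); exists x.
exists (range a); split.
- apply/infinite_natP => m; exists (a m); last by exists m.
  exact: leq_trans (leq_maxr _ _) (aP m).1.
- move=> b Bb; have [Nb gNb] := g_dom b Bb.
  have exceptions_fin : finite_set (`I_Nb `|` [set n | infinite_set (P n `&` b)]).
    by rewrite finite_setU; split; [exact: finite_II | exact: P_thin].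
  apply: sub_finite_set (finite_image a exceptions_fin) => _ [[n _ <-] ban].
  exists n => //; have [nNb|Nbn] := ltnP n Nb; [by left | right].
  move=> Pnb_fin; have := fP b n Pnb_fin (a n) (conj (aP n).2 ban).
  rewrite /= ltnNge => /negP; apply.
  exact: leq_trans (ltnW (gNb n Nbn)) (leq_trans (leq_maxl _ _) (aP n).1).
- by move=> n; exists (a n); split; [exact: (aP n).2 | exists n].
Qed.

Lemma exists_ad_hitting_set {B : set (set nat)} {X : nat -> set nat} :
  AD B -> lt_continuum B -> tight_sequence (gen_ideal B) X ->
  exists N, ad_hitting_set B X N.
Proof.
move=> adB ltB X_tight.
have [P [PX P_inf P_thin]] := tight_sequence_refinement adB ltB X_tight.
have [N [N_inf NB NP]] := exists_ad_selector ltB P_inf P_thin.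
exists N; split=> // n; have [x [Px Nx]] := NP n.
by exists x; split=> //; apply: PX.
Qed.

Section Tower.
Variables (A : set (set nat)) (lt : set nat -> set nat -> Prop).
Hypotheses (adA : AD A) (ltA : lt_continuum A) (lt_wf : well_founded lt)
  (lt_total : forall x y, x <> y -> lt x y \/ lt y x)
  (lt_small : forall t, lt_continuum [set s | lt s t]).

(* Stage [t] handles the sequence [decode t], and every sequence is handled
   by [encodeK].  When no hitting set exists, [xget] returns [set0], which is
   kept out of the family by the [infinite_set] filters below. *)
Definition tower_step (t : set nat) (rec : forall s, lt s t -> set nat) : set nat :=
  xget set0 (ad_hitting_set
    (A `|` [set Y | exists s (st : lt s t), Y = rec s st /\ infinite_set Y]) (decode t)).

Definition tower : set nat -> set nat := Fix lt_wf (fun=> set nat) tower_step.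

Definition tower_below (t : set nat) : set (set nat) :=
  A `|` tower @` [set s | lt s t /\ infinite_set (tower s)].

Definition tower_family : set (set nat) := A `|` tower @` [set t | infinite_set (tower t)].

Lemma towerE t : tower t = xget set0 (ad_hitting_set (tower_below t) (decode t)).
Proof.
rewrite /tower Fix_eq => [|x f g fg]; last first.
  congr (tower_step x _); apply: functional_extensionality_dep => y.
  by apply/funext => st; apply: fg.
rewrite /tower_step /tower_below; congr (xget _ (ad_hitting_set (A `|` _) _)).
apply/seteqP; split=> Y; first by case=> s [st [-> ?]]; exists s.
by case=> s [st ?] <-; exists s, st.
Qed.

Lemma tower_below_sub t : tower_below t `<=` tower_family.
Proof. by move=> Y [AY|[s [_ s_inf] <-]]; [left | right; exists s]. Qed.

Lemma tower_hitting t : infinite_set (tower t) ->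
  ad_hitting_set (tower_below t) (decode t) (tower t).
Proof. by rewrite towerE; case: xgetP => // _ /(_ finite_set0). Qed.

Lemma AD_tower_family : AD tower_family.
Proof.
have new_ad t a : tower_below t a -> infinite_set (tower t) -> finite_set (a `&` tower t).
  by move=> ta /tower_hitting[_ /(_ a ta) + _]; rewrite setIC.
split=> [a [/adA.1 //|[t t_inf <-] //]|a b [Aa|[s s_inf <-]] [Ab|[t t_inf <-]] ab].
- exact: adA.2.
- by apply: new_ad => //; left.
- by rewrite setIC; apply: new_ad => //; left.
- have [st|ts] := lt_total s t (fun st => ab (congr1 tower st)).
    by apply: new_ad => //; right; exists s.
  by rewrite setIC; apply: new_ad => //; right; exists t.
Qed.

Lemma lt_continuum_tower_below t : lt_continuum (tower_below t).
Proof.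
apply: lt_continuum_setU => //.
apply: (sub_lt_continuum _ (lt_continuum_image _ tower (lt_small t))).
by move=> _ [s [st _] <-]; exists s.
Qed.

Lemma strongly_tight_tower_family : strongly_tight tower_family.
Proof.
move=> X X_inf X_tight; pose t := encode X.
have below_tight : tight_sequence (gen_ideal (tower_below t)) (decode t).
  by rewrite encodeK; split=> // Y /(gen_idealS (tower_below_sub t)); apply: X_tight.
have ad_below := sub_AD (tower_below_sub t) AD_tower_family.
have [t_inf _ meets] : ad_hitting_set (tower_below t) (decode t) (tower t).
  rewrite towerE; apply: xgetPex.
  have [N N_hit] := exists_ad_hitting_set ad_below (lt_continuum_tower_below t) below_tight.
  by exists N.
exists (tower t); split; last by rewrite -[X]encodeK.
rewrite -(bigcup_set1 id (tower t)); apply: gen_ideal_bigcup; first exact: finite_set1.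
by move=> _ ->; right; exists t.
Qed.

End Tower.

End PEqualsC.

Theorem mainTheorem10 :
  p_eq_c ->
  forall A : set (set nat), AD A -> lt_continuum A ->
    exists M : set (set nat), A `<=` M /\ MAD M /\ strongly_tight M.
Proof.
move=> pc A adA ltA.
have [lt [lt_wf lt_total lt_small]] := exists_well_order_small_segments.
pose M := tower_family A lt lt_wf.
have adM : AD M by apply: AD_tower_family.
have stM : strongly_tight M by apply: strongly_tight_tower_family.
by exists M; split=> [a Aa|]; [left | split=> //; apply: strongly_tight_AD_MAD].
Qed.
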